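(* Let $G$ be a group with a symmetric, finitely supported generating probability measure $\mu$, and suppose that $(G,\mu)$ admits at least one non-constant positive harmonic function. Then the set of positive harmonic functions on $(G,\mu)$ spans an infinite-dimensional real vector space.
   Context: $\mu$ is generating if the semigroup generated by $\operatorname{supp}\mu$ is $G$, symmetric if $\mu(g)=\mu(g^{-1})$. $f:G\to\mathbb{R}$ is harmonic if $f(x)=\sum_{s\in\operatorname{supp}\mu}\mu(s)f(xs)$ for all $x$; it is positive if it takes only positive values. *)

From Stdlib Require Import Reals List.
Open Scope R_scope.

Definition is_group (G : Type) (mul : G -> G -> G) (one : G) (inv : G -> G) : Prop :=
  (forall x y z, mul x (mul y z) = mul (mul x y) z) /\
  (forall x, mul one x = x) /\ (forall x, mul x one = x) /\
  (forall x, mul (inv x) x = one) /\ (forall x, mul x (inv x) = one).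

Definition sum_list (l : list R) : R := fold_right Rplus 0 l.

Definition support_list {G : Type} (mu : G -> R) (S : list G) : Prop :=
  NoDup S /\ forall g, mu g <> 0 <-> In g S.

Definition fin_supp_prob {G : Type} (mu : G -> R) : Prop :=
  (forall g, 0 <= mu g) /\
  exists S, support_list mu S /\ sum_list (map mu S) = 1.

Definition list_prod {G : Type} (mul : G -> G -> G) (one : G) (l : list G) : G :=
  fold_right mul one l.

Definition generating {G : Type} (mul : G -> G -> G) (one : G) (mu : G -> R) : Prop :=
  forall g, exists l : list G,
    l <> nil /\ Forall (fun s => mu s <> 0) l /\ g = list_prod mul one l.

Definition symmetric_measure {G : Type} (inv : G -> G) (mu : G -> R) : Prop :=
  forall g, mu g = mu (inv g).

Definition harmonic {G : Type} (mul : G -> G -> G) (mu : G -> R) (f : G -> R) : Prop :=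
  exists S, support_list mu S /\
    forall x, f x = sum_list (map (fun s => mu s * f (mul x s)) S).

Definition positive_fun {G : Type} (f : G -> R) : Prop := forall x, 0 < f x.

Definition pos_harmonic {G : Type} (mul : G -> G -> G) (mu : G -> R) (f : G -> R) : Prop :=
  harmonic mul mu f /\ positive_fun f.

Definition lin_indep {G : Type} (n : nat) (fs : nat -> G -> R) : Prop :=
  forall c : nat -> R,
    (forall x, sum_list (map (fun i => c i * fs i x) (seq 0 n)) = 0) ->
    forall i, (i < n)%nat -> c i = 0.

(* If the positive harmonic functions spanned a space of dimension at most [n],
   every nonzero nonnegative harmonic function would dominate an extremal one
   (a minimal ray of the cone), and extremal rays, being linearly independent,
   would be finitely many.  Left translation then permutes the normalized
   translates [e (g x) / e g] of an extremal [e], so the sum of their logarithms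
   is an additive character; by symmetry of [mu] it has zero [mu]-mean, and
   [ln y <= y - 1] forces every translate to be [1]: [e] is constant.  For a
   non-constant positive harmonic [f], [f - inf f] would then dominate a
   positive constant, contradicting the choice of the infimum. *)

From Pilot Require Import Defs.
From Stdlib Require Import Reals List Lra Lia Permutation FinFun Classical.
Open Scope R_scope.

Lemma sum_list_app (l1 l2 : list R) : sum_list (l1 ++ l2) = sum_list l1 + sum_list l2.
Proof. induction l1; simpl; [lra | rewrite IHl1; lra]. Qed.

Lemma sum_list_perm (l l' : list R) : Permutation l l' -> sum_list l = sum_list l'.
Proof. induction 1; simpl; lra. Qed.

Lemma sum_list_const_seq (c : R) (n : nat) :
  sum_list (map (fun _ => c) (seq 0 n)) = INR n * c.
Proof.
  induction n; [simpl; lra|].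
  rewrite seq_S, map_app, sum_list_app, IHn, S_INR; simpl; lra.
Qed.

Section ListSums.
Context {A : Type}.
Implicit Types (f g : A -> R) (l : list A).

Lemma sum_map_plus f g l :
  sum_list (map (fun s => f s + g s) l) = sum_list (map f l) + sum_list (map g l).
Proof. induction l; simpl; [lra | rewrite IHl; lra]. Qed.

Lemma sum_map_minus f g l :
  sum_list (map (fun s => f s - g s) l) = sum_list (map f l) - sum_list (map g l).
Proof. induction l; simpl; [lra | rewrite IHl; lra]. Qed.

Lemma sum_map_scal (c : R) f l :
  sum_list (map (fun s => c * f s) l) = c * sum_list (map f l).
Proof. induction l; simpl; [lra | rewrite IHl; lra]. Qed.

Lemma sum_map_ext f g l : (forall s, In s l -> f s = g s) ->
  sum_list (map f l) = sum_list (map g l).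
Proof. induction l; simpl; intros H; auto. rewrite H, IHl; auto. Qed.

Lemma sum_map_le f g l : (forall s, In s l -> f s <= g s) ->
  sum_list (map f l) <= sum_list (map g l).
Proof.
  induction l; simpl; intros H; [lra|].
  specialize (IHl (fun s h => H s (or_intror h))); specialize (H a (or_introl eq_refl)); lra.
Qed.

Lemma sum_map_nonneg f l : (forall s, In s l -> 0 <= f s) -> 0 <= sum_list (map f l).
Proof.
  intros H; replace 0 with (sum_list (map (fun _ : A => 0) l)) by
    (clear H; induction l; simpl; lra).
  now apply sum_map_le.
Qed.

Lemma sum_map_ge_term f l s : (forall t, In t l -> 0 <= f t) -> In s l ->
  f s <= sum_list (map f l).
Proof.
  induction l; simpl; intros H Hs; [contradiction|].
  assert (0 <= sum_list (map f l)) by (apply sum_map_nonneg; auto).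
  assert (0 <= f a) by auto.
  destruct Hs as [<- | Hs]; [lra|].
  specialize (IHl (fun t h => H t (or_intror h)) Hs); lra.
Qed.

Lemma sum_map_eq0_nonneg f l : (forall s, In s l -> 0 <= f s) ->
  sum_list (map f l) = 0 -> forall s, In s l -> f s = 0.
Proof.
  intros H E s Hs; pose proof (sum_map_ge_term f l s H Hs); specialize (H s Hs); lra.
Qed.

Lemma sum_map_cv (F : nat -> A -> R) (L : A -> R) l :
  (forall s, In s l -> Un_cv (fun n => F n s) (L s)) ->
  Un_cv (fun n => sum_list (map (F n) l)) (sum_list (map L l)).
Proof.
  induction l; simpl; intros H.
  - intros eps Heps; exists 0%nat; intros; unfold Rdist; rewrite Rminus_diag, Rabs_R0; lra.
  - apply CV_plus; auto.
Qed.

End ListSums.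

Lemma sum_map_swap {A B : Type} (F : A -> B -> R) la lb :
  sum_list (map (fun a => sum_list (map (F a) lb)) la) =
  sum_list (map (fun b => sum_list (map (fun a => F a b) la)) lb).
Proof.
  induction la; simpl.
  - induction lb; simpl; auto; rewrite <- IHlb; lra.
  - rewrite IHla, <- sum_map_plus; auto.
Qed.

Lemma sum_seq_split (f : nat -> R) (n i : nat) : (i < n)%nat ->
  sum_list (map f (seq 0 n)) =
  f i + sum_list (map (fun j => if Nat.eq_dec j i then 0 else f j) (seq 0 n)).
Proof.
  intros Hi; assert (Hin : In i (seq 0 n)) by (apply in_seq; lia).
  pose proof (seq_NoDup n 0) as Hnd; revert Hin Hnd.
  induction (seq 0 n) as [|a l IH]; simpl; intros Hin Hnd; [contradiction|].
  inversion Hnd as [|? ? Ha Hl]; subst.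
  destruct Hin as [<- | Hin].
  - destruct (Nat.eq_dec a a) as [_|]; [|congruence].
    rewrite (sum_map_ext (fun j => if Nat.eq_dec j a then 0 else f j) f); [lra|].
    intros s Hs; destruct (Nat.eq_dec s a); [subst; contradiction | auto].
  - rewrite (IH Hin Hl); destruct (Nat.eq_dec a i); [subst; contradiction | lra].
Qed.

Lemma ln_lt_sub1 x : 0 < x -> x <> 1 -> ln x < x - 1.
Proof.
  intros Hx Hx1.
  assert (ln x <> 0) by (intros H; apply Hx1, ln_inv; [lra | lra | now rewrite ln_1]).
  pose proof (exp_ineq1 (ln x) H); rewrite exp_ln in *; lra.
Qed.

Lemma ln_le_sub1 x : 0 < x -> ln x <= x - 1.
Proof.
  intros Hx; destruct (Req_dec x 1) as [->|]; [rewrite ln_1; lra|].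
  left; now apply ln_lt_sub1.
Qed.

(* Summing [ln y <= y - 1] over [i] and averaging over [s] gives [0 <= k - k], so
   every [ln (r i s) = r i s - 1], i.e. [r i s = 1]. *)
Lemma mean_one_log_mean_zero {A : Type} (l : list A) (w : A -> R) (k : nat)
    (r : nat -> A -> R) :
  (forall s, In s l -> 0 < w s) -> sum_list (map w l) = 1 ->
  (forall i s, (i < k)%nat -> 0 < r i s) ->
  (forall i, (i < k)%nat -> sum_list (map (fun s => w s * r i s) l) = 1) ->
  sum_list (map (fun s => w s * sum_list (map (fun i => ln (r i s)) (seq 0 k))) l) = 0 ->
  forall s i, In s l -> (i < k)%nat -> r i s = 1.
Proof.
  intros Hw Hw1 Hr Hmean Hlog s i Hs Hi.
  set (gap := fun s i => r i s - 1 - ln (r i s)).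
  assert (Hgap : forall s i, (i < k)%nat -> 0 <= gap s i)
    by (intros t j Hj; pose proof (ln_le_sub1 _ (Hr j t Hj)); unfold gap; lra).
  set (d := fun s => sum_list (map (gap s) (seq 0 k))).
  assert (Hd : forall s, 0 <= d s)
    by (intros t; apply sum_map_nonneg; intros j Hj; apply in_seq in Hj; apply Hgap; lia).
  assert (Hd_expand : forall s, d s = sum_list (map (fun i => r i s) (seq 0 k)) - INR k
                                    - sum_list (map (fun i => ln (r i s)) (seq 0 k))).
  { intros t; unfold d, gap.
    rewrite !sum_map_minus, <- (Rmult_1_r (INR k)), <- sum_list_const_seq; lra. }
  assert (Hrsum : sum_list (map (fun s => w s * sum_list (map (fun i => r i s) (seq 0 k))) l)
                  = INR k).
  { rewrite (sum_map_ext _ (fun s => sum_list (map (fun i => w s * r i s) (seq 0 k))))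
      by (intros; now rewrite sum_map_scal).
    rewrite (sum_map_swap (fun s i => w s * r i s)).
    rewrite (sum_map_ext _ (fun _ => 1)), sum_list_const_seq; [lra|].
    intros j Hj; apply in_seq in Hj; apply Hmean; lia. }
  assert (Hzero : sum_list (map (fun s => w s * d s) l) = 0).
  { rewrite (sum_map_ext _ (fun s => w s * sum_list (map (fun i => r i s) (seq 0 k))
                                     - (INR k * w s + w s * sum_list (map (fun i => ln (r i s)) (seq 0 k)))))
      by (intros; rewrite Hd_expand; ring).
    rewrite sum_map_minus, sum_map_plus, sum_map_scal, Hrsum, Hw1, Hlog; lra. }
  assert (Hds : d s = 0).
  { pose proof (sum_map_eq0_nonneg (fun s => w s * d s) l
                  (fun t Ht => Rmult_le_pos _ _ (Rlt_le _ _ (Hw t Ht)) (Hd t)) Hzero s Hs).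
    pose proof (Hw s Hs); simpl in *; nra. }
  assert (Hgi : gap s i = 0).
  { apply (sum_map_eq0_nonneg (gap s) (seq 0 k)); auto; [|apply in_seq; lia].
    intros j Hj; apply in_seq in Hj; apply Hgap; lia. }
  destruct (Req_dec (r i s) 1) as [|Hne]; auto.
  pose proof (ln_lt_sub1 _ (Hr i s Hi) Hne); unfold gap in Hgi; lra.
Qed.

Lemma finite_choice (k : nat) (P : nat -> nat -> Prop) :
  (forall i, (i < k)%nat -> exists j, P i j) ->
  exists sigma, forall i, (i < k)%nat -> P i (sigma i).
Proof.
  induction k as [|k IH]; intros H; [exists (fun i => i); lia|].
  destruct IH as [sigma Hsigma]; [intros; apply H; lia|].
  destruct (H k) as [j Hj]; [lia|].
  exists (fun i => if Nat.eq_dec i k then j else sigma i); intros i Hi.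
  destruct (Nat.eq_dec i k); [now subst | apply Hsigma; lia].
Qed.

Lemma sum_seq_reindex (sigma : nat -> nat) (f : nat -> R) (k : nat) :
  (forall i, (i < k)%nat -> (sigma i < k)%nat) ->
  (forall i j, (i < k)%nat -> (j < k)%nat -> sigma i = sigma j -> i = j) ->
  sum_list (map (fun i => f (sigma i)) (seq 0 k)) = sum_list (map f (seq 0 k)).
Proof.
  intros Hrange Hinj; rewrite <- (map_map sigma f).
  apply sum_list_perm, Permutation_map, Permutation_map_same_l.
  - apply Injective_map_NoDup_in; [|apply seq_NoDup].
    intros i j Hi Hj; apply in_seq in Hi, Hj; apply Hinj; lia.
  - intros y Hy; apply in_map_iff in Hy as [i [<- Hi]]; apply in_seq in Hi.
    apply in_seq; specialize (Hrange i); lia.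
Qed.

Lemma bounded_nat_pred_max (P : nat -> Prop) (M : nat) :
  (exists a, P a) -> (forall k, P k -> (k <= M)%nat) ->
  exists k, P k /\ forall k', P k' -> (k' <= k)%nat.
Proof.
  intros [a Pa] HM.
  destruct (Wf_nat.dec_inh_nat_subset_has_unique_least_element
              (fun m => forall k, P k -> (k <= m)%nat)) as [m [[Hm Hmin] _]];
    [intros; apply classic | now exists M |].
  exists m; split; auto.
  apply NNPP; intros HPm.
  assert (Hbelow : forall k, P k -> (k <= m - 1)%nat).
  { intros k Pk; specialize (Hm k Pk); assert (k <> m) by (intros ->; auto); lia. }
  specialize (Hmin _ Hbelow); specialize (Hbelow a Pa); assert (a <> m) by (intros ->; auto); lia.
Qed.

Section LinearIndependence.
Context {X : Type}.
Implicit Types (fs : nat -> X -> R).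

Lemma lin_indep_le m n fs : lin_indep m fs -> (n <= m)%nat -> lin_indep n fs.
Proof.
  intros H Hnm c Hc i Hi.
  set (c' := fun j => if Compare_dec.lt_dec j n then c j else 0).
  assert (Hc' : forall x, sum_list (map (fun j => c' j * fs j x) (seq 0 m)) = 0).
  { intros x; replace m with (n + (m - n))%nat by lia.
    rewrite seq_app, map_app, sum_list_app.
    rewrite (sum_map_ext _ (fun j => c j * fs j x)), Hc,
            (sum_map_ext _ (fun _ => 0 * 0)), sum_map_scal; [lra| |];
      intros j Hj; apply in_seq in Hj; unfold c';
      destruct (Compare_dec.lt_dec j n); try lia; lra. }
  specialize (H c' Hc' i ltac:(lia)); unfold c' in H.
  destruct (Compare_dec.lt_dec i n); [auto | lia].
Qed.

Lemma lin_indep_nonzero m fs i : lin_indep m fs -> (i < m)%nat -> exists x, fs i x <> 0.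
Proof.
  intros H Hi; apply NNPP; intros Hz.
  set (c := fun j => if Nat.eq_dec j i then 1 else 0).
  assert (c i = 0); [|unfold c in *; destruct (Nat.eq_dec i i); [lra | congruence]].
  apply (H c); auto; intros x.
  rewrite (sum_seq_split _ m i Hi), (sum_map_ext _ (fun _ => 0)), sum_list_const_seq.
  - unfold c; destruct (Nat.eq_dec i i) as [_|]; [|congruence].
    assert (fs i x = 0) by (apply NNPP; intros Hx; apply Hz; now exists x).
    lra.
  - intros j _; unfold c; destruct (Nat.eq_dec j i); lra.
Qed.

Lemma lin_indep_single (f : X -> R) : (exists x, f x <> 0) -> lin_indep 1 (fun _ => f).
Proof.
  intros [x Hx] c Hc i Hi; replace i with 0%nat by lia.
  specialize (Hc x); simpl in Hc; apply NNPP; intros Hc0; apply Hx.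
  apply (Rmult_eq_reg_l (c 0%nat)); auto; lra.
Qed.

Lemma lin_indep_snoc m fs (w : X -> R) : lin_indep m fs ->
  (forall a : nat -> R, ~ forall x, w x = sum_list (map (fun j => a j * fs j x) (seq 0 m))) ->
  lin_indep (S m) (fun i => if Nat.eq_dec i m then w else fs i).
Proof.
  intros Hind Hw c Hc.
  assert (Hc' : forall x, sum_list (map (fun j => c j * fs j x) (seq 0 m)) + c m * w x = 0).
  { intros x; specialize (Hc x).
    rewrite seq_S, map_app, sum_list_app in Hc; simpl in Hc.
    destruct (Nat.eq_dec m m) as [_|]; [|congruence].
    rewrite (sum_map_ext _ (fun j => c j * fs j x)) in Hc; [lra|].
    intros j Hj; apply in_seq in Hj; destruct (Nat.eq_dec j m); [lia | auto]. }
  assert (Hcm : c m = 0).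
  { apply NNPP; intros Hcm; apply (Hw (fun j => - c j / c m)); intros x.
    rewrite (sum_map_ext _ (fun j => (- / c m) * (c j * fs j x))) by (intros; unfold Rdiv; ring).
    rewrite sum_map_scal; specialize (Hc' x).
    apply (Rmult_eq_reg_l (c m)); auto; field_simplify; auto; lra. }
  intros i Hi; destruct (Nat.eq_dec i m) as [->|]; auto.
  apply (Hind c); [|lia]; intros x; specialize (Hc' x); rewrite Hcm in Hc'; lra.
Qed.

End LinearIndependence.

Lemma Un_cv_const (c : R) : Un_cv (fun _ => c) c.
Proof. intros eps Heps; exists 0%nat; intros; unfold Rdist; rewrite Rminus_diag, Rabs_R0; lra. Qed.

Lemma Un_cv_succ (u : nat -> R) l : Un_cv u l -> Un_cv (fun n => u (S n)) l.
Proof. intros H eps Heps; destruct (H eps Heps) as [N HN]; exists N; intros; apply HN; lia. Qed.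

Section MarkovOperator.
Variables (G : Type) (mul : G -> G -> G) (mu : G -> R) (S0 : list G).
Hypothesis mu_nonneg : forall g, 0 <= mu g.
Hypothesis mu_sum1 : sum_list (map mu S0) = 1.

Definition Pmu (h : G -> R) (x : G) : R := sum_list (map (fun s => mu s * h (mul x s)) S0).

Definition mu_harmonic (h : G -> R) : Prop := forall x, h x = Pmu h x.

Definition nonneg_harmonic (h : G -> R) : Prop := (forall x, 0 <= h x) /\ mu_harmonic h.

Definition proportional (u w : G -> R) : Prop := exists a, forall x, u x = a * w x.

Definition minorant (h w : G -> R) : Prop :=
  nonneg_harmonic w /\ exists c, forall x, w x <= c * h x.

Definition extremal (e : G -> R) : Prop :=
  nonneg_harmonic e /\ (exists x, e x <> 0) /\ forall w, minorant e w -> proportional w e.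

Lemma Pmu_le h1 h2 x : (forall y, h1 y <= h2 y) -> Pmu h1 x <= Pmu h2 x.
Proof. intros H; apply sum_map_le; intros s _; apply Rmult_le_compat_l; auto. Qed.

Lemma Pmu_const c x : Pmu (fun _ => c) x = c.
Proof.
  unfold Pmu; rewrite (sum_map_ext _ (fun s => c * mu s)) by (intros; ring).
  rewrite sum_map_scal, mu_sum1; ring.
Qed.

Lemma Pmu_nonneg h x : (forall y, 0 <= h y) -> 0 <= Pmu h x.
Proof. intros H; rewrite <- (Pmu_const 0 x); now apply Pmu_le. Qed.

Lemma Pmu_lin a b h1 h2 x :
  Pmu (fun y => a * h1 y + b * h2 y) x = a * Pmu h1 x + b * Pmu h2 x.
Proof.
  unfold Pmu.
  rewrite (sum_map_ext _ (fun s => a * (mu s * h1 (mul x s)) + b * (mu s * h2 (mul x s))))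
    by (intros; ring).
  rewrite sum_map_plus, !sum_map_scal; ring.
Qed.

Lemma mu_harmonic_ext h1 h2 : mu_harmonic h1 -> (forall x, h2 x = h1 x) -> mu_harmonic h2.
Proof. intros H E x; rewrite E, H; apply sum_map_ext; intros; now rewrite E. Qed.

Lemma mu_harmonic_lin a b h1 h2 : mu_harmonic h1 -> mu_harmonic h2 ->
  mu_harmonic (fun y => a * h1 y + b * h2 y).
Proof. intros H1 H2 x; now rewrite Pmu_lin, <- H1, <- H2. Qed.

Lemma mu_harmonic_const c : mu_harmonic (fun _ => c).
Proof. intros x; now rewrite Pmu_const. Qed.

Lemma nonneg_harmonic_scal a h : 0 <= a -> nonneg_harmonic h -> nonneg_harmonic (fun x => a * h x).
Proof.
  intros Ha [H0 H]; split; [intros; now apply Rmult_le_pos|].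
  apply (mu_harmonic_ext (fun x => a * h x + 0 * h x)); [now apply mu_harmonic_lin | intros; ring].
Qed.

Lemma nonneg_harmonic_sum (v : nat -> G -> R) (l : list nat) :
  (forall j, In j l -> nonneg_harmonic (v j)) ->
  nonneg_harmonic (fun x => sum_list (map (fun j => v j x) l)).
Proof.
  induction l as [|a l IH]; simpl; intros Hv.
  - split; [intros; lra | apply mu_harmonic_const].
  - destruct IH as [IH0 IH]; [auto|]; destruct (Hv a (or_introl eq_refl)) as [Ha0 Ha].
    split; [intros x; specialize (IH0 x); specialize (Ha0 x); lra|].
    apply (mu_harmonic_ext (fun x => 1 * v a x + 1 * sum_list (map (fun j => v j x) l)));
      [now apply mu_harmonic_lin | intros; ring].
Qed.

(* The iterates [P^n m] of a nonnegative superharmonic [m] decrease to the greatest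
   harmonic minorant of [m]. *)
Lemma greatest_harmonic_minorant (m : G -> R) :
  (forall x, 0 <= m x) -> (forall x, Pmu m x <= m x) ->
  exists l, nonneg_harmonic l /\ (forall x, l x <= m x) /\
    forall h, mu_harmonic h -> (forall x, h x <= m x) -> forall x, h x <= l x.
Proof.
  intros Hm0 Hsuper.
  set (u := fun n x => Nat.iter n Pmu m x).
  assert (Hu0 : forall n x, 0 <= u n x)
    by (induction n; intros x; [apply Hm0 | now apply Pmu_nonneg]).
  assert (Hdecr : forall n x, u (S n) x <= u n x)
    by (induction n; intros x; [apply Hsuper | now apply Pmu_le]).
  assert (Hcv : forall x, { l | Un_cv (fun n => u n x) l }).
  { intros x; apply decreasing_cv; [intros n; apply Hdecr|].
    exists 0; intros y [n ->]; unfold opp_seq; specialize (Hu0 n x); lra. }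
  set (l := fun x => proj1_sig (Hcv x)).
  assert (Hl : forall x, Un_cv (fun n => u n x) (l x)) by (intros x; apply (proj2_sig (Hcv x))).
  exists l; split; [split|split].
  - intros x; apply (Rle_cv_lim (fun n => Hu0 n x) (Un_cv_const 0) (Hl x)).
  - intros x; apply (UL_sequence (fun n => u (S n) x)); [apply (Un_cv_succ (fun n => u n x)), Hl|].
    apply (sum_map_cv (fun n s => mu s * u n (mul x s))).
    intros s _; apply CV_mult; [apply Un_cv_const | apply Hl].
  - intros x; exact (decreasing_ineq (fun n => u n x) (l x) (fun n => Hdecr n x) (Hl x) 0).
  - intros h Hh Hhm x.
    assert (Hhu : forall n y, h y <= u n y)
      by (induction n; intros y; [apply Hhm | rewrite Hh; now apply Pmu_le]).
    apply (Rle_cv_lim (fun n => Hhu n x) (Un_cv_const (h x)) (Hl x)).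
Qed.

Lemma riesz_decomposition e u v : nonneg_harmonic e -> nonneg_harmonic u -> nonneg_harmonic v ->
  (forall x, e x <= u x + v x) ->
  exists l, nonneg_harmonic l /\ (forall x, l x <= e x) /\ (forall x, l x <= u x) /\
    (forall x, e x - v x <= l x).
Proof.
  intros [He0 He] [Hu0 Hu] [Hv0 Hv] Hle.
  destruct (greatest_harmonic_minorant (fun x => Rmin (e x) (u x))) as [l [Hl [Hlm Hmax]]].
  - intros x; now apply Rmin_glb.
  - intros x; apply Rmin_glb; [rewrite He | rewrite Hu]; apply Pmu_le;
      intros y; [apply Rmin_l | apply Rmin_r].
  - exists l; split; [auto|split; [|split]].
    + intros x; eapply Rle_trans; [apply Hlm | apply Rmin_l].
    + intros x; eapply Rle_trans; [apply Hlm | apply Rmin_r].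
    + intros x; replace (e x - v x) with (1 * e x + (-1) * v x) by ring; revert x.
      apply Hmax; [now apply mu_harmonic_lin|].
      intros x; apply Rmin_glb; specialize (Hv0 x); specialize (Hle x); lra.
Qed.

Definition no_common_minorant (e v : G -> R) : Prop :=
  forall w, minorant e w -> (forall x, w x <= v x) -> forall x, w x = 0.

Lemma minorant_nonneg_const h w : (forall x, 0 <= h x) -> minorant h w ->
  exists c, 0 <= c /\ forall x, w x <= c * h x.
Proof.
  intros Hh [_ [c Hc]]; exists (Rmax 0 c); split; [apply Rmax_l|].
  intros x; eapply Rle_trans; [apply Hc|].
  apply Rmult_le_compat_r; [apply Hh | apply Rmax_r].
Qed.

Lemma minorant_trans h h' w : (forall x, 0 <= h' x) -> (forall x, h' x <= h x) ->
  minorant h' w -> minorant h w.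
Proof.
  intros Hh' Hle Hw; destruct (minorant_nonneg_const h' w Hh' Hw) as [c [Hc0 Hc]].
  split; [apply Hw|]; exists c; intros x.
  eapply Rle_trans; [apply Hc | now apply Rmult_le_compat_l].
Qed.

Lemma not_le_sum_no_common_minorant e (v : nat -> G -> R) (l : list nat) :
  nonneg_harmonic e -> (exists x, e x <> 0) ->
  (forall j, In j l -> nonneg_harmonic (v j)) ->
  (forall j, In j l -> no_common_minorant e (v j)) ->
  ~ (forall x, e x <= sum_list (map (fun j => v j x) l)).
Proof.
  intros He Hnz; induction l as [|a l IH]; simpl; intros Hv Hnc Hle.
  - destruct Hnz as [x0 Hx0]; specialize (Hle x0); pose proof (proj1 He x0); lra.
  - destruct (riesz_decomposition e (v a) (fun x => sum_list (map (fun j => v j x) l)) He)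
      as [w [Hw [Hwe [Hwa Hwrest]]]]; auto using nonneg_harmonic_sum.
    assert (Hw0 : forall x, w x = 0).
    { apply (Hnc a); auto; split; [auto | exists 1; intros x; specialize (Hwe x); lra]. }
    apply IH; auto; intros x; specialize (Hwrest x); rewrite Hw0 in Hwrest; lra.
Qed.

Lemma extremal_no_common_minorant e e' a : extremal e -> extremal e' ->
  ~ proportional e e' -> no_common_minorant e (fun x => a * e' x).
Proof.
  intros [_ [_ He]] [_ [_ He']] Hnp w Hw Hwle x; apply NNPP; intros Hwx.
  destruct (He w Hw) as [b Hb].
  destruct (He' w) as [b' Hb']; [split; [apply Hw | now exists a]|].
  assert (b <> 0) by (intros ->; apply Hwx; rewrite Hb; ring).
  apply Hnp; exists (b' / b); intros y.
  apply (Rmult_eq_reg_l b); auto; rewrite <- Hb, Hb'; field; auto.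
Qed.

(* From [sum_j c_j r_j = 0] and [c_i <> 0], [r_i] is bounded by a nonnegative
   combination of the other [r_j], none of which shares a minorant with [r_i]. *)
Lemma extremal_lin_indep m (r : nat -> G -> R) :
  (forall i, (i < m)%nat -> extremal (r i)) ->
  (forall i j, (i < m)%nat -> (j < m)%nat -> i <> j -> ~ proportional (r i) (r j)) ->
  lin_indep m r.
Proof.
  intros Hext Hnp c Hc i Hi; apply NNPP; intros Hci.
  set (a := fun j => if Nat.eq_dec j i then 0 else Rmax 0 (- c j / c i)).
  assert (Ha0 : forall j, 0 <= a j)
    by (intros j; unfold a; destruct (Nat.eq_dec j i); [lra | apply Rmax_l]).
  apply (not_le_sum_no_common_minorant (r i) (fun j x => a j * r j x) (seq 0 m)).
  - apply Hext; auto.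
  - apply Hext; auto.
  - intros j Hj; apply in_seq in Hj; apply nonneg_harmonic_scal; [apply Ha0 | apply Hext; lia].
  - intros j Hj w Hw Hwle x; apply in_seq in Hj; unfold a in Hwle.
    destruct (Nat.eq_dec j i) as [->|Hji].
    + specialize (Hwle x); pose proof (proj1 (proj1 Hw) x); lra.
    + apply (extremal_no_common_minorant (r i) (r j) (Rmax 0 (- c j / c i))); auto;
        apply Hext || apply Hnp; lia.
  - intros x; specialize (Hc x).
    rewrite (sum_seq_split _ m i Hi) in Hc.
    assert (Hri : r i x = - / c i *
              sum_list (map (fun j => if Nat.eq_dec j i then 0 else c j * r j x) (seq 0 m))).
    { apply (Rmult_eq_reg_l (c i)); auto; field_simplify; auto; lra. }
    rewrite Hri, <- sum_map_scal; apply sum_map_le; intros j Hj; apply in_seq in Hj.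
    unfold a; destruct (Nat.eq_dec j i) as [_|Hji]; [lra|].
    replace (- / c i * (c j * r j x)) with (- c j / c i * r j x) by (field; auto).
    apply Rmult_le_compat_r; [apply (proj1 (proj1 (Hext j ltac:(lia)))) | apply Rmax_r].
Qed.

Lemma maximal_multiple (h w : G -> R) :
  (forall x, 0 <= h x) -> (forall x, 0 <= w x) -> (exists x, w x <> 0) ->
  exists T, 0 <= T /\ (forall x, T * w x <= h x) /\
    forall K, ~ (forall x, w x <= K * (h x - T * w x)).
Proof.
  intros Hh Hw [x0 Hx0].
  assert (Hwx0 : 0 < w x0) by (specialize (Hw x0); lra).
  set (E := fun t => forall x, t * w x <= h x).
  assert (HE_le : forall t x, E t -> 0 < w x -> t <= h x / w x).
  { intros t x Ht Hwx; apply (Rmult_le_reg_r (w x)); auto.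
    unfold Rdiv; rewrite Rmult_assoc, Rinv_l; [specialize (Ht x); lra | lra]. }
  assert (HE0 : E 0) by (intros x; specialize (Hh x); lra).
  destruct (completeness E) as [T [HTub HTlub]];
    [exists (h x0 / w x0); intros t Ht; now apply HE_le | now exists 0 |].
  assert (HT : E T).
  { intros x; destruct (Req_dec (w x) 0) as [->|Hwx].
    - rewrite Rmult_0_r; apply Hh.
    - assert (Hwx' : 0 < w x) by (specialize (Hw x); lra).
      assert (T <= h x / w x) by (apply HTlub; intros t Ht; now apply HE_le).
      apply (Rmult_le_compat_r (w x)) in H; [|lra].
      unfold Rdiv in H; rewrite Rmult_assoc, Rinv_l in H; lra. }
  exists T; split; [now apply HTub | split; [exact HT|]].
  intros K HK; set (K1 := Rmax 1 K).
  assert (HK1 : 0 < K1) by (pose proof (Rmax_l 1 K); unfold K1; lra).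
  assert (HE : E (T + / K1)).
  { intros x; specialize (HK x); specialize (HT x).
    assert (w x <= K1 * (h x - T * w x))
      by (eapply Rle_trans; [apply HK | apply Rmult_le_compat_r; [lra | apply Rmax_r]]).
    apply (Rmult_le_reg_l K1); auto.
    replace (K1 * ((T + / K1) * w x)) with (K1 * (T * w x) + w x) by (field; lra); nra. }
  pose proof (HTub _ HE); pose proof (Rinv_0_lt_compat _ HK1); lra.
Qed.

Lemma minorant_span_bound h (fs : nat -> G -> R) (a : nat -> R) m :
  (forall x, 0 <= h x) -> (forall i, (i < m)%nat -> minorant h (fs i)) ->
  exists K, forall x, sum_list (map (fun j => a j * fs j x) (seq 0 m)) <= K * h x.
Proof.
  intros Hh; induction m as [|m IH]; intros Hfs; [exists 0; intros x; simpl; lra|].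
  destruct IH as [K HK]; [intros; apply Hfs; lia|].
  destruct (minorant_nonneg_const h (fs m) Hh (Hfs m ltac:(lia))) as [c [Hc0 Hc]].
  exists (K + Rabs (a m) * c); intros x.
  rewrite seq_S, map_app, sum_list_app; simpl.
  specialize (HK x); specialize (Hc x); pose proof (proj1 (proj1 (Hfs m ltac:(lia))) x).
  assert (a m * fs m x <= Rabs (a m) * fs m x)
    by (apply Rmult_le_compat_r; [auto | apply RRle_abs]).
  assert (Rabs (a m) * fs m x <= Rabs (a m) * (c * h x))
    by (apply Rmult_le_compat_l; [apply Rabs_pos | auto]).
  lra.
Qed.

Definition minorant_dim_le (h : G -> R) (M : nat) : Prop :=
  forall m fs, (forall i, (i < m)%nat -> minorant h (fs i)) -> lin_indep m fs -> (m <= M)%nat.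

(* With [T] the largest multiple of [w] below [h], [w] is not dominated by
   [h - T w], so it extends any independent family of minorants of [h - T w]. *)
Lemma minorant_dim_shrink h w M : nonneg_harmonic h -> (exists x, h x <> 0) ->
  minorant h w -> ~ proportional w h -> minorant_dim_le h (S M) ->
  exists h', nonneg_harmonic h' /\ (exists x, h' x <> 0) /\ (forall x, h' x <= h x) /\
    minorant_dim_le h' M.
Proof.
  intros Hh Hhnz Hw Hnp Hdim.
  assert (Hwnz : exists x, w x <> 0).
  { apply NNPP; intros Hz; apply Hnp; exists 0; intros x.
    apply NNPP; intros Hx; apply Hz; exists x; lra. }
  destruct (maximal_multiple h w (proj1 Hh) (proj1 (proj1 Hw)) Hwnz) as [T [HT0 [HT Hmax]]].
  pose proof (proj1 (proj1 Hw)) as Hw0.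
  set (h' := fun x => 1 * h x + (- T) * w x).
  assert (Hh' : nonneg_harmonic h').
  { split; [intros x; specialize (HT x); unfold h'; lra|].
    apply mu_harmonic_lin; [apply Hh | apply Hw]. }
  assert (Hh'le : forall x, h' x <= h x) by (intros x; specialize (Hw0 x); unfold h'; nra).
  exists h'; split; [auto | split; [|split; [auto|]]].
  - apply NNPP; intros Hz.
    assert (Hhw : forall x, h x = T * w x)
      by (intros x; apply NNPP; intros Hx; apply Hz; exists x; unfold h'; lra).
    assert (T <> 0) by (intros HT'; destruct Hhnz as [x Hx]; apply Hx; rewrite Hhw, HT'; ring).
    apply Hnp; exists (/ T); intros x; rewrite Hhw; field; auto.
  - intros m fs Hfs Hind.
    enough (S m <= S M)%nat by lia.
    apply (Hdim _ (fun i => if Nat.eq_dec i m then w else fs i)).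
    + intros i Hi; destruct (Nat.eq_dec i m); [auto|].
      apply (minorant_trans h h'); [apply Hh' | auto | apply Hfs; lia].
    + apply lin_indep_snoc; auto; intros a Ha.
      destruct (minorant_span_bound h' fs a m (proj1 Hh') Hfs) as [K HK].
      apply (Hmax K); intros x.
      replace (h x - T * w x) with (h' x) by (unfold h'; ring); rewrite Ha; apply HK.
Qed.

Lemma exists_extremal_minorant M : forall h, nonneg_harmonic h -> (exists x, h x <> 0) ->
  minorant_dim_le h M -> exists e, extremal e /\ minorant h e.
Proof.
  assert (Hrefl : forall h, nonneg_harmonic h -> minorant h h)
    by (intros h Hh; split; [auto | exists 1; intros; lra]).
  induction M as [|M IH]; intros h Hh Hnz Hdim.
  - assert (1 <= 0)%nat; [|lia].
    apply (Hdim 1%nat (fun _ => h)); [auto | now apply lin_indep_single].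
  - destruct (classic (forall w, minorant h w -> proportional w h)) as [Hext|Hnext].
    + exists h; split; [split; [|split] | ]; auto.
    + apply not_all_ex_not in Hnext as [w Hw]; apply imply_to_and in Hw as [Hw Hnp].
      destruct (minorant_dim_shrink h w M Hh Hnz Hw Hnp Hdim) as [h' [Hh' [Hnz' [Hle Hdim']]]].
      destruct (IH h' Hh' Hnz' Hdim') as [e [He Hmin]].
      exists e; split; auto; apply (minorant_trans h h'); auto; apply Hh'.
Qed.

Section RandomWalkOnGroup.
Variables (one : G) (inv : G -> G).
Hypothesis group : is_group G mul one inv.
Hypothesis support : support_list mu S0.
Hypothesis symmetric : symmetric_measure inv mu.
Hypothesis generates : generating mul one mu.

Lemma mulA x y z : mul x (mul y z) = mul (mul x y) z.
Proof. apply group. Qed.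

Lemma mul1g x : mul one x = x.
Proof. apply group. Qed.

Lemma mulg1 x : mul x one = x.
Proof. apply group. Qed.

Lemma mulVg x : mul (inv x) x = one.
Proof. apply group. Qed.

Lemma mulgV x : mul x (inv x) = one.
Proof. apply group. Qed.

Lemma mulKVg g x : mul g (mul (inv g) x) = x.
Proof. now rewrite mulA, mulgV, mul1g. Qed.

Lemma invgK x : inv (inv x) = x.
Proof. now rewrite <- (mulg1 (inv (inv x))), <- (mulVg x), mulA, mulVg, mul1g. Qed.

Lemma mu_pos_support s : In s S0 -> 0 < mu s.
Proof. intros Hs; apply support in Hs; specialize (mu_nonneg s); lra. Qed.

Lemma support_words g : exists l, (forall s, In s l -> In s S0) /\ g = Defs.list_prod mul one l.
Proof.
  destruct (generates g) as [l [_ [Hl ->]]]; exists l; split; auto.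
  intros s Hs; rewrite Forall_forall in Hl; now apply support, Hl.
Qed.

Lemma perm_inv_support : Permutation (map inv S0) S0.
Proof.
  apply Permutation_map_same_l.
  - apply Injective_map_NoDup; [|apply support].
    intros a b H; now rewrite <- (invgK a), <- (invgK b), H.
  - intros y Hy; apply in_map_iff in Hy as [s [<- Hs]].
    apply support; rewrite <- symmetric; now apply support.
Qed.

Lemma harmonic_mu_harmonic f : harmonic mul mu f -> mu_harmonic f.
Proof.
  intros [S [HS Hf]] x; rewrite Hf; apply sum_list_perm, Permutation_map.
  apply NoDup_Permutation; [apply HS | apply support|].
  intros y; rewrite <- (proj2 HS), <- (proj2 support); tauto.
Qed.

Lemma nonneg_harmonic_zero_mul h y s : nonneg_harmonic h -> h y = 0 -> In s S0 ->
  h (mul y s) = 0.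
Proof.
  intros [H0 H] Hy Hs.
  pose proof (sum_map_ge_term (fun t => mu t * h (mul y t)) S0 s
                (fun t _ => Rmult_le_pos _ _ (mu_nonneg t) (H0 _)) Hs) as Hterm.
  change (sum_list _) with (Pmu h y) in Hterm; rewrite <- H, Hy in Hterm.
  pose proof (mu_pos_support s Hs); specialize (H0 (mul y s)); nra.
Qed.

(* Every element is reached from [y] by steps in [S0], along which zeros propagate. *)
Lemma nonneg_harmonic_zero h y : nonneg_harmonic h -> h y = 0 -> forall z, h z = 0.
Proof.
  intros Hh Hy z; destruct (support_words (mul (inv y) z)) as [l [Hl E]].
  rewrite <- (mulKVg y z), E; clear E; revert y Hy Hl.
  induction l as [|s l IH]; intros y Hy Hl; simpl; [now rewrite mulg1|].
  rewrite mulA; apply IH; [|intros; apply Hl; simpl; auto].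
  apply nonneg_harmonic_zero_mul; auto; apply Hl; simpl; auto.
Qed.

Lemma nonneg_harmonic_pos h : nonneg_harmonic h -> (exists x, h x <> 0) -> forall x, 0 < h x.
Proof.
  intros Hh [y Hy] x; destruct (proj1 Hh x) as [|Hx]; auto.
  exfalso; apply Hy; now apply (nonneg_harmonic_zero h x).
Qed.

Lemma nonneg_harmonic_translate g h : nonneg_harmonic h ->
  nonneg_harmonic (fun x => h (mul g x)).
Proof.
  intros [H0 H]; split; [auto|]; intros x.
  rewrite H; apply sum_map_ext; intros; now rewrite mulA.
Qed.

Lemma extremal_translate g e : extremal e -> extremal (fun x => e (mul g x)).
Proof.
  intros [He [[x0 Hx0] Hext]]; split; [now apply nonneg_harmonic_translate | split].
  - exists (mul (inv g) x0); now rewrite mulKVg.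
  - intros w [Hw [c Hc]]; destruct (Hext (fun x => w (mul (inv g) x))) as [a Ha].
    + split; [now apply nonneg_harmonic_translate|].
      exists c; intros x; specialize (Hc (mul (inv g) x)); now rewrite mulKVg in Hc.
    + exists a; intros y; specialize (Ha (mul g y)).
      now rewrite mulA, mulVg, mul1g in Ha.
Qed.

Lemma extremal_scal a e : 0 < a -> extremal e -> extremal (fun x => a * e x).
Proof.
  intros Ha [He [[x0 Hx0] Hext]]; split; [apply nonneg_harmonic_scal; auto; lra | split].
  - exists x0; intros H; apply Rmult_integral in H as [|]; [lra | auto].
  - intros w [Hw [c Hc]]; destruct (Hext w) as [b Hb].
    + split; auto; exists (c * a); intros x; specialize (Hc x); lra.
    + exists (b / a); intros x; rewrite Hb; field; lra.
Qed.

Definition log_sum (k : nat) (r : nat -> G -> R) (y : G) : R :=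
  sum_list (map (fun i => ln (r i y)) (seq 0 k)).

(* Translation by [g] permutes the [r i] up to scalars; non-proportionality makes
   the induced index map injective, hence a permutation of [0, k). *)
Lemma log_sum_additive k (r : nat -> G -> R) :
  (forall i x, (i < k)%nat -> 0 < r i x) ->
  (forall i j, (i < k)%nat -> (j < k)%nat -> i <> j -> ~ proportional (r i) (r j)) ->
  (forall g i, (i < k)%nat -> exists j, (j < k)%nat /\ forall x, r i (mul g x) = r i g * r j x) ->
  forall g x, log_sum k r (mul g x) = log_sum k r g + log_sum k r x.
Proof.
  intros Hpos Hnp Htr g x.
  destruct (finite_choice k (fun i j => (j < k)%nat /\
                                        forall y, r i (mul g y) = r i g * r j y))
    as [sigma Hsigma]; [intros i Hi; destruct (Htr g i Hi) as [j Hj]; now exists j|].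
  unfold log_sum.
  rewrite (sum_map_ext _ (fun i => ln (r i g) + ln (r (sigma i) x))), sum_map_plus.
  - f_equal; apply (sum_seq_reindex sigma (fun j => ln (r j x))); [apply Hsigma|].
    intros a b Ha Hb Hab; destruct (Nat.eq_dec a b) as [|Hne]; auto; exfalso.
    apply (Hnp a b Ha Hb Hne); exists (r a g / r b g); intros y.
    destruct (Hsigma a Ha) as [_ Ea]; destruct (Hsigma b Hb) as [_ Eb].
    specialize (Ea (mul (inv g) y)); specialize (Eb (mul (inv g) y)).
    rewrite mulKVg in Ea, Eb; rewrite Ea, Eb, Hab; field.
    specialize (Hpos b g Hb); lra.
  - intros i Hi; apply in_seq in Hi; destruct (Hsigma i ltac:(lia)) as [Hj E].
    rewrite E; apply ln_mult; apply Hpos; lia.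
Qed.

Lemma additive_mean_zero (theta : G -> R) :
  (forall g x, theta (mul g x) = theta g + theta x) ->
  sum_list (map (fun s => mu s * theta s) S0) = 0.
Proof.
  intros Hadd.
  assert (H1 : theta one = 0) by (pose proof (Hadd one one) as H; rewrite mul1g in H; lra).
  assert (Hinv : forall s, theta (inv s) = - theta s)
    by (intros s; pose proof (Hadd s (inv s)) as H; rewrite mulgV, H1 in H; lra).
  enough (sum_list (map (fun s => mu s * theta s) S0)
          = - sum_list (map (fun s => mu s * theta s) S0)) by lra.
  rewrite <- (sum_list_perm _ _ (Permutation_map (fun s => mu s * theta s) perm_inv_support))
    at 1.
  rewrite map_map, (sum_map_ext _ (fun s => (-1) * (mu s * theta s))), sum_map_scal; [ring|].
  intros s _; rewrite Hinv, <- symmetric; ring.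
Qed.

(* [log_sum] is an additive character with zero [mu]-mean, while each [r i] has
   [mu]-mean [1]; [ln y <= y - 1] then forces [r i = 1] on the support, hence
   everywhere. *)
Lemma translation_closed_family_trivial k (r : nat -> G -> R) :
  (forall i, (i < k)%nat -> nonneg_harmonic (r i)) ->
  (forall i x, (i < k)%nat -> 0 < r i x) ->
  (forall i, (i < k)%nat -> r i one = 1) ->
  (forall i j, (i < k)%nat -> (j < k)%nat -> i <> j -> ~ proportional (r i) (r j)) ->
  (forall g i, (i < k)%nat -> exists j, (j < k)%nat /\ forall x, r i (mul g x) = r i g * r j x) ->
  forall i x, (i < k)%nat -> r i x = 1.
Proof.
  intros Hharm Hpos Hone Hnp Htr.
  assert (Hsupp : forall s i, In s S0 -> (i < k)%nat -> r i s = 1).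
  { apply (mean_one_log_mean_zero S0 mu k r mu_pos_support mu_sum1).
    - intros i s Hi; now apply Hpos.
    - intros i Hi; rewrite <- (Hone i Hi), (proj2 (Hharm i Hi) one).
      apply sum_map_ext; intros; now rewrite mul1g.
    - apply (additive_mean_zero (log_sum k r)), (log_sum_additive k r); auto. }
  assert (Hwords : forall l, (forall s, In s l -> In s S0) ->
                   forall i, (i < k)%nat -> r i (Defs.list_prod mul one l) = 1).
  { induction l as [|s l IH]; intros Hl i Hi; simpl; [now apply Hone|].
    destruct (Htr s i Hi) as [j [Hj E]].
    rewrite E, (Hsupp s i), IH; [ring | | auto | apply Hl; simpl; auto | auto].
    intros t Ht; apply Hl; simpl; auto. }
  intros i x Hi; destruct (support_words x) as [l [Hl ->]]; now apply Hwords.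
Qed.

Definition normalized_translate (e : G -> R) (g : G) (x : G) : R := / e g * e (mul g x).

Lemma extremal_normalized_translate e g : extremal e -> extremal (normalized_translate e g).
Proof.
  intros He; apply extremal_scal; [|now apply extremal_translate].
  apply Rinv_0_lt_compat, nonneg_harmonic_pos; apply He.
Qed.

Lemma normalized_translate_one e g : extremal e -> normalized_translate e g one = 1.
Proof.
  intros He; unfold normalized_translate; rewrite mulg1; field.
  enough (0 < e g) by lra; apply nonneg_harmonic_pos; apply He.
Qed.

Lemma normalized_translate_mul e g y x : extremal e ->
  normalized_translate e g (mul y x) =
  normalized_translate e g y * normalized_translate e (mul g y) x.
Proof.
  intros He; assert (Hpos : forall z, 0 < e z) by (apply nonneg_harmonic_pos; apply He).
  unfold normalized_translate; rewrite mulA; field.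
  pose proof (Hpos g); pose proof (Hpos (mul g y)); split; lra.
Qed.

Lemma proportional_normalized_eq u w : u one = 1 -> w one = 1 -> proportional u w ->
  forall x, u x = w x.
Proof.
  intros Hu Hw [a Ha] x; specialize (Ha one) as Ha1; rewrite Hu, Hw in Ha1.
  rewrite Ha; replace a with 1 by lra; ring.
Qed.

Definition harmonic_dim_le (M : nat) : Prop :=
  forall m fs, (forall i, (i < m)%nat -> nonneg_harmonic (fs i)) -> lin_indep m fs ->
    (m <= M)%nat.

Lemma normalized_translates_finite M e : harmonic_dim_le M -> extremal e ->
  exists k (gs : nat -> G),
    (forall i j, (i < k)%nat -> (j < k)%nat -> i <> j ->
       ~ proportional (normalized_translate e (gs i)) (normalized_translate e (gs j))) /\
    forall g, exists j, (j < k)%nat /\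
      forall x, normalized_translate e g x = normalized_translate e (gs j) x.
Proof.
  intros Hdim He; set (N := normalized_translate e).
  set (Q := fun k => exists gs : nat -> G, forall i j, (i < k)%nat -> (j < k)%nat -> i <> j ->
                                           ~ proportional (N (gs i)) (N (gs j))).
  destruct (bounded_nat_pred_max Q M) as [k [[gs Hgs] Hmax]].
  - exists 1%nat, (fun _ => one); intros; lia.
  - intros k [gs Hgs]; apply (Hdim k (fun i => N (gs i))).
    + intros i _; apply extremal_normalized_translate, He.
    + apply extremal_lin_indep; auto; intros; now apply extremal_normalized_translate.
  - exists k, gs; split; auto; intros g; apply NNPP; intros Hnew.
    enough (S k <= k)%nat by lia.
    apply Hmax; exists (fun i => if Nat.eq_dec i k then g else gs i).
    intros i j Hi Hj Hij Hprop.
    assert (Heq : forall x, N (if Nat.eq_dec i k then g else gs i) x =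
                            N (if Nat.eq_dec j k then g else gs j) x)
      by (apply proportional_normalized_eq; auto; apply normalized_translate_one, He).
    destruct (Nat.eq_dec i k), (Nat.eq_dec j k); try lia.
    + apply Hnew; exists j; split; [lia | auto].
    + apply Hnew; exists i; split; [lia | intros x; now rewrite Heq].
    + apply (Hgs i j); try lia; exists 1; intros x; rewrite Heq; ring.
Qed.

(* The finitely many normalized translates of [e] form a translation-closed family. *)
Lemma extremal_const M e : harmonic_dim_le M -> extremal e -> forall x, e x = e one.
Proof.
  intros Hdim He; set (N := normalized_translate e).
  destruct (normalized_translates_finite M e Hdim He) as [k [gs [Hnp Hcover]]].
  assert (Hext : forall g, extremal (N g)) by (intros g; now apply extremal_normalized_translate).
  assert (Htriv : forall i x, (i < k)%nat -> N (gs i) x = 1).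
  { apply translation_closed_family_trivial; auto.
    - intros i _; apply Hext.
    - intros i x _; apply nonneg_harmonic_pos; apply Hext.
    - intros i _; now apply normalized_translate_one.
    - intros g i Hi; destruct (Hcover (mul (gs i) g)) as [j [Hj E]].
      exists j; split; auto; intros x; rewrite <- E; now apply normalized_translate_mul. }
  intros x; destruct (Hcover one) as [j [Hj E]]; specialize (E x).
  rewrite Htriv in E by auto; unfold N, normalized_translate in E; rewrite mul1g in E.
  assert (0 < e one) by (apply nonneg_harmonic_pos; apply He).
  apply (Rmult_eq_reg_l (/ e one)); [rewrite E; field; lra | apply Rinv_neq_0_compat; lra].
Qed.

(* With [T = inf f], an extremal minorant [e] of [f - T] is a positive constant,
   so [f >= T + e / c] contradicts the choice of [T]. *)
Lemma finite_dim_liouville M f : harmonic_dim_le M -> nonneg_harmonic f ->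
  forall x y, f x = f y.
Proof.
  intros Hdim [Hf0 Hf].
  set (E := fun t => forall x, t <= f x).
  destruct (completeness E) as [T [HTub HTlub]];
    [exists (f one); intros t Ht; apply Ht | exists 0; intros x; apply Hf0 |].
  assert (HT : forall x, T <= f x) by (intros x; apply HTlub; intros t Ht; apply Ht).
  set (h := fun x => 1 * f x + (- T) * 1).
  assert (Hh : nonneg_harmonic h).
  { split; [intros x; specialize (HT x); unfold h; lra|].
    apply mu_harmonic_lin; [auto | apply mu_harmonic_const]. }
  destruct (classic (exists x, h x <> 0)) as [Hnz | Hz].
  2: { assert (Hconst : forall z, f z = T)
         by (intros z; apply NNPP; intros Hne; apply Hz; exists z; unfold h; lra).
       intros x y; now rewrite !Hconst. }
  exfalso.
  destruct (exists_extremal_minorant M h Hh Hnz) as [e [He Hmin]].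
  { intros m fs Hfs; apply Hdim; intros i Hi; apply Hfs; auto. }
  destruct (minorant_nonneg_const h e (proj1 Hh) Hmin) as [c [Hc0 Hc]].
  assert (He1 : 0 < e one) by (apply nonneg_harmonic_pos; apply He).
  assert (Hcpos : 0 < c) by (destruct Hc0 as [|<-]; auto; specialize (Hc one); lra).
  assert (HE : E (T + e one / c)).
  { intros x; specialize (Hc x); rewrite (extremal_const M e Hdim He x) in Hc.
    replace (h x) with (f x - T) in Hc by (unfold h; ring).
    enough (e one / c <= f x - T) by lra.
    apply (Rmult_le_reg_l c); auto; replace (c * (e one / c)) with (e one) by (field; lra); lra. }
  specialize (HTub _ HE); pose proof (Rdiv_lt_0_compat _ _ He1 Hcpos); lra.
Qed.

Lemma harmonic_dim_le_of_no_family n :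
  ~ (exists fs : nat -> G -> R,
        (forall i, (i < n)%nat -> pos_harmonic mul mu (fs i)) /\ lin_indep n fs) ->
  harmonic_dim_le n.
Proof.
  intros Hno m fs Hfs Hind; destruct (Compare_dec.le_lt_dec m n) as [|Hlt]; auto.
  exfalso; apply Hno; exists fs; split; [|apply (lin_indep_le m); auto; lia].
  intros i Hi; split.
  - exists S0; split; [auto | exact (proj2 (Hfs i ltac:(lia)))].
  - intros x; apply nonneg_harmonic_pos; [apply Hfs; lia|].
    apply (lin_indep_nonzero m); auto; lia.
Qed.

Lemma pos_harmonic_families n :
  (exists f, pos_harmonic mul mu f /\ exists x y, f x <> f y) ->
  exists fs : nat -> G -> R,
    (forall i, (i < n)%nat -> pos_harmonic mul mu (fs i)) /\ lin_indep n fs.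
Proof.
  intros [f [[Hfh Hfp] [x [y Hxy]]]]; apply NNPP; intros Hno; apply Hxy.
  apply (finite_dim_liouville n); [now apply harmonic_dim_le_of_no_family|].
  split; [intros z; specialize (Hfp z); lra | now apply harmonic_mu_harmonic].
Qed.

End RandomWalkOnGroup.
End MarkovOperator.

Theorem proposition8p3 (G : Type) (mul : G -> G -> G) (one : G) (inv : G -> G)
  (mu : G -> R) :
  is_group G mul one inv ->
  fin_supp_prob mu ->
  symmetric_measure inv mu ->
  generating mul one mu ->
  (exists f : G -> R, pos_harmonic mul mu f /\ exists x y, f x <> f y) ->
  forall n : nat, exists fs : nat -> G -> R,
    (forall i, (i < n)%nat -> pos_harmonic mul mu (fs i)) /\ lin_indep n fs.
Proof.
  intros Hgroup [Hnonneg [S0 [Hsupp Hsum]]] Hsym Hgen Hf n.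
  exact (pos_harmonic_families G mul mu S0 Hnonneg Hsum one inv Hgroup Hsupp Hsym Hgen n Hf).
Qed.
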